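(* Let $G=(V,E)$ be an undirected graph (finite or infinite) and let $\widehat A,\widehat B$ be two color classes of $G$. Then $\widehat A=\widehat B$ if and only if $\widetilde A=\widetilde B$.
   Context: A graph $G=(V,E)$ has vertex set $V$ and edge set $E\subseteq V^2$; it is undirected if $E$ is irreflexive and symmetric. Implication classes: on $E$ define $(a,b)\Gamma(a',b')$ iff either $a=a'$ and $(b,b')\notin E$, or $b=b'$ and $(a,a')\notin E$; the classes of the transitive closure $\Gamma^*$ are the implication classes. For an implication class $A$, $A^{-1}=\{(b,a):(a,b)\in A\}$ and the color class is $\widehat A=A\cup A^{-1}$. $\widetilde A$ denotes the set of vertices $a$ such that $(a,b)\in A$ or $(b,a)\in A$ for some $b$ (the vertex set spanned by $\widehat A$). *)

(* Graphs may be infinite: vertex set is an arbitrary Type V,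
   edge set a Prop-valued relation E (E a b  <->  (a,b) \in E). *)
From Stdlib Require Import Relations.
Set Implicit Arguments.

Section Graphs.
Variable V : Type.
Variable E : V -> V -> Prop.

Definition undirected : Prop :=
  (forall a, ~ E a a) /\ (forall a b, E a b -> E b a).

Definition Gamma (e f : V * V) : Prop :=
  E (fst e) (snd e) /\ E (fst f) (snd f) /\
  ((fst e = fst f /\ ~ E (snd e) (snd f)) \/
   (snd e = snd f /\ ~ E (fst e) (fst f))).

Definition implication_class (A : V * V -> Prop) : Prop :=
  exists a b, E a b /\
    forall x y, A (x, y) <-> (E x y /\ clos_refl_trans _ Gamma (a, b) (x, y)).

Definition inv_class (A : V * V -> Prop) : V * V -> Prop :=
  fun p => A (snd p, fst p).

Definition color_class (A : V * V -> Prop) : V * V -> Prop :=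
  fun p => A p \/ inv_class A p.

Definition span_class (A : V * V -> Prop) : V -> Prop :=
  fun v => exists w, A (v, w) \/ A (w, v).

End Graphs.

(* Up to reversal of edges a color class is a Gamma^*-class of edges, so two
   color classes sharing an edge coincide.  Key fact: if [(x, y)] lies in Â and
   [v] is joined to [x] and [y] by edges outside Â, then [v] is not in Ã, since
   this configuration propagates along Gamma inside Â and would eventually
   reach an edge at [v].  Now let Ã = B̃ and [(a, b)] be in Â but not in B̂.
   Some [(a, w)] lies in B̂, and [b w] is an edge, else Gamma moves [(a, w)] to
   [(a, b)].  If [(b, w)] is in B̂, the key fact for Â excludes [w] from Ã;
   otherwise the key fact for B̂ and [(a, w)] excludes [b] from B̃. *)
From Stdlib Require Import Relations Classical.

Section ColorClasses.

Variables (V : Type) (E : V -> V -> Prop).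
Hypothesis HE : undirected E.

Definition swap (p : V * V) : V * V := (snd p, fst p).

Lemma swap_involutive p : swap (swap p) = p.
Proof. destruct p; reflexivity. Qed.

Lemma Gamma_fst a b c : E a b -> E a c -> ~ E b c -> Gamma E (a, b) (a, c).
Proof. unfold Gamma; simpl; tauto. Qed.

Lemma Gamma_sym e f : Gamma E e f -> Gamma E f e.
Proof.
  destruct HE as [_ Hsym]; unfold Gamma.
  intros (He & Hf & [[Heq Hn] | [Heq Hn]]); repeat split; auto;
    [left | right]; split; auto.
Qed.

Lemma Gamma_swap e f : Gamma E e f -> Gamma E (swap e) (swap f).
Proof. destruct HE as [_ Hsym]; unfold Gamma, swap; simpl; intuition. Qed.

Notation Gamma_star := (clos_refl_trans _ (Gamma E)).

Lemma Gamma_star_sym e f : Gamma_star e f -> Gamma_star f e.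
Proof.
  induction 1; [apply rt_step, Gamma_sym; assumption | apply rt_refl | eapply rt_trans; eauto].
Qed.

Lemma Gamma_star_swap e f : Gamma_star e f -> Gamma_star (swap e) (swap f).
Proof.
  induction 1; [apply rt_step, Gamma_swap; assumption | apply rt_refl | eapply rt_trans; eauto].
Qed.

Definition linked (e f : V * V) : Prop := Gamma_star e f \/ Gamma_star e (swap f).

Lemma linked_sym e f : linked e f -> linked f e.
Proof.
  intros [H | H]; [left | right]; apply Gamma_star_sym; auto.
  rewrite <- (swap_involutive f); apply Gamma_star_swap; assumption.
Qed.

Lemma linked_trans e f g : linked e f -> linked f g -> linked e g.
Proof.
  intros [H | H] [H' | H'].
  - left; eapply rt_trans; eauto.
  - right; eapply rt_trans; eauto.
  - right; eapply rt_trans; [exact H | apply Gamma_star_swap; exact H'].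
  - left; eapply rt_trans; [exact H |].
    rewrite <- (swap_involutive g); apply Gamma_star_swap; exact H'.
Qed.

Lemma color_class_swap (A : V * V -> Prop) x y :
  color_class A (x, y) -> color_class A (y, x).
Proof. unfold color_class, inv_class; simpl; tauto. Qed.

Lemma span_classE (A : V * V -> Prop) v :
  span_class A v <-> exists w, color_class A (v, w).
Proof. unfold span_class, color_class, inv_class; simpl; tauto. Qed.

Section ImplicationClass.

Variable A : V * V -> Prop.
Hypothesis HA : implication_class E A.

Lemma color_class_linked :
  exists e, forall q, color_class A q <-> E (fst q) (snd q) /\ linked e q.
Proof.
  destruct HA as (a & b & Hab & HAab), HE as [_ Hsym].
  exists (a, b); intros [x y].
  unfold color_class, inv_class, linked, swap; simpl; rewrite !HAab.
  intuition.
Qed.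

Lemma color_class_edge q : color_class A q -> E (fst q) (snd q).
Proof. destruct color_class_linked as [e He]; intros Hq; apply He in Hq; tauto. Qed.

Lemma color_class_Gamma e f : Gamma E e f -> color_class A e -> color_class A f.
Proof.
  destruct color_class_linked as [g Hg]; intros Hef He.
  apply Hg in He; apply Hg; split; [apply Hef |].
  apply linked_trans with e; [tauto | left; apply rt_step; exact Hef].
Qed.

Lemma color_class_linked_members e f :
  color_class A e -> color_class A f -> linked e f.
Proof.
  destruct color_class_linked as [g Hg]; intros He Hf.
  apply Hg in He; apply Hg in Hf.
  apply linked_trans with g; [apply linked_sym |]; tauto.
Qed.

Definition apex (v : V) (e : V * V) : Prop :=
  E v (fst e) /\ E v (snd e) /\
  ~ color_class A (v, fst e) /\ ~ color_class A (v, snd e).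

Lemma apex_swap v e : apex v e -> apex v (swap e).
Proof. unfold apex, swap; simpl; tauto. Qed.

Lemma apex_Gamma_fst v p c c' :
  E p c' -> ~ E c c' -> color_class A (p, c) -> apex v (p, c) -> apex v (p, c').
Proof.
  destruct HE as [_ Hsym].
  intros Hpc' Hcc' Hpc (Hvp & Hvc & Hnp & Hnc); simpl in *.
  pose proof (color_class_edge _ Hpc) as Hpc_edge; simpl in Hpc_edge.
  assert (Hpc'A : color_class A (p, c')).
  { apply (color_class_Gamma (p, c)); [apply Gamma_fst |]; auto. }
  assert (Hvc' : E v c').
  { apply NNPP; intro Hn; apply Hnp, color_class_swap.
    apply (color_class_Gamma (p, c')); [apply Gamma_fst |]; auto. }
  repeat split; simpl; auto.
  intro Hvc'A; apply Hnc.
  apply (color_class_Gamma (v, c')); [apply Gamma_fst |]; auto.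
Qed.

Lemma apex_Gamma v e f : Gamma E e f -> color_class A e -> apex v e -> apex v f.
Proof.
  destruct e as [p c], f as [p' c'].
  intros (Hpc & Hpc' & [[Heq Hn] | [Heq Hn]]) He Hv; simpl in *; subst.
  - apply apex_Gamma_fst with c; auto.
  - apply (apex_swap v (c', p')).
    apply apex_Gamma_fst with p.
    + apply HE; exact Hpc'.
    + exact Hn.
    + apply color_class_swap; exact He.
    + apply (apex_swap v (p, c')); exact Hv.
Qed.

Lemma apex_Gamma_star v e f :
  Gamma_star e f -> color_class A e -> apex v e -> apex v f.
Proof.
  intros H; apply clos_rt_rt1n in H; induction H; auto.
  intros He Hv; apply IHclos_refl_trans_1n.
  - apply color_class_Gamma with x; assumption.
  - apply apex_Gamma with x; assumption.
Qed.

Lemma apex_not_span v e : color_class A e -> apex v e -> ~ span_class A v.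
Proof.
  destruct HE as [Hirr _].
  intros He Hv Hspan; apply span_classE in Hspan as [w Hw].
  destruct (color_class_linked_members e (v, w) He Hw) as [H | H];
    apply (apex_Gamma_star v) in H; auto; unfold apex, swap in H; simpl in H;
    destruct H as (H1 & H2 & _); eapply Hirr; eauto.
Qed.

End ImplicationClass.

Lemma color_class_shared A B p q :
  implication_class E A -> implication_class E B ->
  color_class A p -> color_class B p -> color_class A q -> color_class B q.
Proof.
  intros HA HB HpA HpB HqA.
  destruct (color_class_linked B HB) as [g Hg].
  apply Hg in HpB; apply Hg; split; [apply (color_class_edge A HA q HqA) |].
  apply linked_trans with p; [tauto |].
  apply (color_class_linked_members A HA); assumption.
Qed.

Lemma color_class_of_span A B p :
  implication_class E A -> implication_class E B ->
  (forall v, span_class A v <-> span_class B v) ->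
  color_class A p -> color_class B p.
Proof.
  destruct HE as [_ Hsym]; intros HA HB Hspan.
  destruct p as [a b]; intros Hab; apply NNPP; intro Hnab.
  pose proof (color_class_edge A HA _ Hab) as Eab; simpl in Eab.
  assert (Haw : exists w, color_class B (a, w)).
  { apply span_classE, Hspan, span_classE; eauto. }
  destruct Haw as [w Haw].
  pose proof (color_class_edge B HB _ Haw) as Eaw; simpl in Eaw.
  assert (Ebw : E b w).
  { apply NNPP; intro Hn; apply Hnab.
    apply (color_class_Gamma B HB (a, w)); [apply Gamma_fst|]; auto. }
  assert (Hw : span_class B w) by (apply span_classE; eauto using color_class_swap).
  assert (Hb : span_class A b) by (apply span_classE; eauto using color_class_swap).
  destruct (classic (color_class B (b, w))) as [Hbw | Hbw].
  - apply Hspan in Hw; revert Hw.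
    apply (apex_not_span A HA w (a, b)); auto.
    repeat split; simpl; auto; intro H; apply Hnab.
    + apply (color_class_shared A B (w, a)); auto using color_class_swap.
    + apply (color_class_shared A B (w, b)); auto using color_class_swap.
  - apply Hspan in Hb; revert Hb.
    apply (apex_not_span B HB b (a, w)); auto.
    repeat split; simpl; auto using color_class_swap.
Qed.

End ColorClasses.

Theorem proposition3p1 (V : Type) (E : V -> V -> Prop)
  (HE : undirected E) (A B : V * V -> Prop)
  (HA : implication_class E A) (HB : implication_class E B) :
  (forall p, color_class A p <-> color_class B p) <->
  (forall v, span_class A v <-> span_class B v).
Proof.
  split.
  - intros Hcol v; rewrite !span_classE.
    split; intros [w Hw]; exists w; apply Hcol; assumption.
  - intros Hspan p; split; apply (color_class_of_span _ _ HE); auto.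
    intro v; symmetry; apply Hspan.
Qed.
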